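(* Let $R$ be an Armendariz ring. Then the polynomial ring $R[x]$ is a generalized right quasi-Baer ring if and only if $R$ is a generalized right quasi-Baer ring.
   Context: All rings are associative with identity. For a nonempty subset $X$ of a ring $R$, $r_R(X)=\{a\in R : xa=0 \text{ for all } x\in X\}$, and for a positive integer $n$, $X^n$ denotes the set of all products $a_1\cdots a_n$ with $a_i\in X$. A ring $R$ is generalized right quasi-Baer if for every right ideal $I$ of $R$ there exist a positive integer $n$ (depending on $I$) and an idempotent $e\in R$ with $r_R(I^n)=eR$. A ring $R$ is Armendariz if whenever polynomials $f(x)=\sum_{i=0}^m a_ix^i$ and $g(x)=\sum_{j=0}^n b_jx^j$ in $R[x]$ satisfy $f(x)g(x)=0$, then $a_ib_j=0$ for all $i,j$. *)

From HB Require Import structures.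
From mathcomp Require Import all_boot all_algebra.
Set Implicit Arguments. Unset Strict Implicit. Unset Printing Implicit Defensive.
Import GRing.Theory.
Local Open Scope ring_scope.

(* Subsets of a (possibly infinite) ring are predicates R -> Prop. *)

Definition right_ideal (R : nzRingType) (I : R -> Prop) : Prop :=
  [/\ I 0,
      (forall a b, I a -> I b -> I (a - b)) &
      (forall a r, I a -> I (a * r))].

Definition r_ann (R : nzRingType) (X : R -> Prop) : R -> Prop :=
  fun a => forall x, X x -> x * a = 0.

Definition set_pow (R : nzRingType) (X : R -> Prop) (n : nat) : R -> Prop :=
  fun y => exists s : seq R,
    [/\ size s = n, (forall a, a \in s -> X a) & y = \prod_(a <- s) a].

Definition principal_right (R : nzRingType) (e : R) : R -> Prop :=
  fun a => exists r, a = e * r.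

Definition gen_right_quasi_Baer (R : nzRingType) : Prop :=
  forall I : R -> Prop, right_ideal I ->
    exists n : nat, exists e : R,
      (0 < n)%N /\ e * e = e /\
      (forall a, r_ann (set_pow I n) a <-> principal_right e a).

Definition armendariz (R : nzRingType) : Prop :=
  forall f g : {poly R}, f * g = 0 -> forall i j : nat, f`_i * g`_j = 0.

(* Attach to a right ideal I of R the right ideal I[x] of polynomials with coefficients in I,
   and to a right ideal J of R[x] the right ideal C(J) of R spanned by the coefficients of
   elements of J.  Expanding coefficients of products shows that a constant a lies in
   r(I[x]^n) exactly when a lies in r(I^n), and that a lies in r(J^n) as soon as it lies
   in r(C(J)^n).  The Armendariz property gives the converse: a polynomial f lies in
   r(J^n) only if all its coefficients lie in r(C(J)^n).  Hence an idempotent e with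
   r(C(J)^n) = eR yields r(J^n) = e R[x], and an idempotent E with r(I[x]^n) = E R[x]
   yields r(I^n) = E_0 R. *)

From HB Require Import structures.
From mathcomp Require Import all_boot all_algebra.
Set Implicit Arguments. Unset Strict Implicit. Unset Printing Implicit Defensive.
Import GRing.Theory.
Local Open Scope ring_scope.

Section Ideals.
Variable R : nzRingType.
Implicit Types (P : R -> Prop) (J : {poly R} -> Prop).

Definition poly_ideal P : {poly R} -> Prop := fun g => forall i, P g`_i.

Definition coef_ideal J : R -> Prop := fun a => exists g i, J g /\ g`_i = a.

Lemma right_ideal_poly P : right_ideal P -> right_ideal (poly_ideal P).
Proof.
move=> [P0 PB PM]; have PD a b : P a -> P b -> P (a + b).
  by move=> Pa Pb; have := PB a (0 - b) Pa (PB _ _ P0 Pb); rewrite sub0r opprK.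
split.
- by move=> i; rewrite coef0.
- by move=> f g Pf Pg i; rewrite coefB; apply: PB.
- by move=> f g Pf i; rewrite coefM; apply: (big_ind P) => // j _; apply: PM.
Qed.

Lemma right_ideal_coef J : right_ideal J -> right_ideal (coef_ideal J).
Proof.
move=> [J0 JB JM]; split.
- by exists 0, 0%N; rewrite coef0.
- move=> _ _ [g [i [Jg <-]]] [h [j [Jh <-]]].
  exists (g * 'X^j - h * 'X^i), (i + j)%N; split; first by apply: JB; apply: JM.
  by rewrite coefB !coefMXn ltnNge leq_addl ltnNge leq_addr /= addnK addKn.
- move=> _ r [g [i [Jg <-]]]; exists (g * r%:P), i.
  by split; [apply: JM | rewrite coefMC].
Qed.

Lemma poly_ideal_coef_ideal J g : J g -> poly_ideal (coef_ideal J) g.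
Proof. by move=> Jg i; exists g, i. Qed.

End Ideals.

Section Powers.
Variable R : nzRingType.
Implicit Types (X Y : R -> Prop).

Lemma set_pow0 X : set_pow X 0 1.
Proof. by exists [::]; split; rewrite ?big_nil. Qed.

Lemma set_pow_cons X n a p : X a -> set_pow X n p -> set_pow X n.+1 (a * p).
Proof.
move=> Xa [s [sz Xs ->]]; exists (a :: s); split; rewrite ?big_cons /= ?sz //.
by move=> b; rewrite in_cons => /orP [/eqP -> //|]; apply: Xs.
Qed.

Lemma set_pow_sub X Y n : (forall x, X x -> Y x) -> forall p, set_pow X n p -> set_pow Y n p.
Proof. by move=> XY p [s [sz Xs ->]]; exists s; split => // a /Xs /XY. Qed.

Lemma r_ann_sub X Y a : (forall x, X x -> Y x) -> r_ann Y a -> r_ann X a.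
Proof. by move=> XY Ya x /XY /Ya. Qed.

Lemma r_ann_mulr X a r : r_ann X a -> r_ann X (a * r).
Proof. by move=> Xa x /Xa xa; rewrite mulrA xa mul0r. Qed.

End Powers.

Section Coefficients.
Variable R : nzRingType.
Implicit Types (P : R -> Prop) (J : {poly R} -> Prop).

(* Each coefficient of a product of n polynomials with coefficients in P is a sum of
   elements of P^n, so it is killed by whatever kills P^n on both sides. *)
Lemma coef_prod_set_pow P (t u : R) (gs : seq {poly R}) :
  (forall g, g \in gs -> poly_ideal P g) ->
  (forall p, set_pow P (size gs) p -> t * p * u = 0) ->
  forall m, t * (\prod_(g <- gs) g)`_m * u = 0.
Proof.
elim: gs t => [|g gs IH] t Pgs Hp m.
  rewrite big_nil coef1; case: (m == 0%N); last by rewrite mulr0 mul0r.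
  by have := Hp _ (set_pow0 P).
rewrite big_cons coefM mulr_sumr mulr_suml big1 // => i _.
rewrite mulrA; apply: IH => [h hgs|p Pp].
  by apply: Pgs; rewrite in_cons hgs orbT.
rewrite -(mulrA t); apply: Hp; apply: set_pow_cons Pp.
by apply: Pgs; rewrite in_cons eqxx.
Qed.

Lemma r_ann_set_pow_polyC P n u :
  r_ann (set_pow P n) u -> r_ann (set_pow (poly_ideal P) n) u%:P.
Proof.
move=> Pu _ [gs [sz Pgs ->]]; apply/polyP => m; rewrite coefMC coef0.
have := @coef_prod_set_pow P 1 u gs Pgs _ m; rewrite mul1r; apply=> p.
by rewrite sz mul1r; apply: Pu.
Qed.

Lemma set_pow_polyC P n p :
  P 0 -> set_pow P n p -> set_pow (poly_ideal P) n p%:P.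
Proof.
move=> P0 [s [sz Ps ->]]; exists (map polyC s); split; first by rewrite size_map.
- by move=> _ /mapP [a sa ->] i; rewrite coefC; case: (i == 0)%N => //; apply: Ps.
- by rewrite (big_morph _ (@polyCM R) (erefl 1%:P)) big_map.
Qed.

Lemma r_ann_poly_ideal_coef P n f k :
  P 0 -> r_ann (set_pow (poly_ideal P) n) f -> r_ann (set_pow P n) f`_k.
Proof.
move=> P0 Pf p Pp; have := congr1 (coefp k) (Pf _ (set_pow_polyC P0 Pp)).
by rewrite /= coefCM coef0.
Qed.

Lemma armendariz_coefC_mul (f g : {poly R}) :
  armendariz R -> f * g = 0 -> forall i, (f`_i)%:P * g = 0.
Proof. by move=> HA fg i; apply/polyP => m; rewrite coefCM coef0; apply: HA fg i m. Qed.

(* Peel off one factor at a time: Armendariz moves a single coefficient of the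
   leftmost polynomial into a constant, which is then absorbed into [c]. *)
Lemma armendariz_coef_prod J (c h : {poly R}) (s : seq R) :
  armendariz R ->
  (forall a, a \in s -> coef_ideal J a) ->
  (forall p, set_pow J (size s) p -> c * p * h = 0) ->
  forall k j, c`_k * \prod_(a <- s) a * h`_j = 0.
Proof.
move=> HA; elim: s c => [|a s IH] c Js Hp k j.
  have ch : c * h = 0 by rewrite -[c]mulr1; apply: Hp (set_pow0 J).
  by rewrite big_nil mulr1; apply: HA ch k j.
have [g [i [Jg gia]]] : coef_ideal J a by apply: Js; rewrite in_cons eqxx.
rewrite big_cons mulrA -gia -(coefCM (c`_k) g i).
apply: IH => [b sb|p Jp]; first by apply: Js; rewrite in_cons sb orbT.
have cgph : c * (g * p * h) = 0 by rewrite !mulrA -(mulrA c); apply: Hp (set_pow_cons Jg Jp).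
by have := armendariz_coefC_mul HA cgph k; rewrite !mulrA.
Qed.

Lemma r_ann_set_pow_coef_ideal J n f k :
  armendariz R -> r_ann (set_pow J n) f -> r_ann (set_pow (coef_ideal J) n) f`_k.
Proof.
move=> HA Jf _ [s [sz Js ->]].
have := @armendariz_coef_prod J 1 f s HA Js _ 0%N k.
rewrite coef1 eqxx mul1r; apply=> p; rewrite sz mul1r; exact: Jf.
Qed.

End Coefficients.

Section QuasiBaer.
Variable R : nzRingType.

Lemma idempotent_mul_principal (e a : R) : e * e = e -> principal_right e a -> e * a = a.
Proof. by move=> ee [r ->]; rewrite mulrA ee. Qed.

Lemma gen_right_quasi_Baer_coef : gen_right_quasi_Baer {poly R} -> gen_right_quasi_Baer R.
Proof.
move=> HP I RI; have [I0 _ _] := RI.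
have [n [E [n_gt0 [EE HE]]]] := HP _ (right_ideal_poly RI).
have annE : r_ann (set_pow (poly_ideal I) n) E by apply/HE; exists 1; rewrite mulr1.
exists n, E`_0; split => //; split; first by rewrite -coef0M EE.
move=> a; split => [Ia|[r ->]]; last exact/r_ann_mulr/r_ann_poly_ideal_coef.
have [q aEq] := (HE a%:P).1 (r_ann_set_pow_polyC Ia).
by exists q`_0; rewrite -coef0M -aEq coefC.
Qed.

Lemma gen_right_quasi_Baer_poly :
  armendariz R -> gen_right_quasi_Baer R -> gen_right_quasi_Baer {poly R}.
Proof.
move=> HA HR J RJ.
have [n [e [n_gt0 [ee He]]]] := HR _ (right_ideal_coef RJ).
have anne : r_ann (set_pow (coef_ideal J) n) e by apply/He; exists 1; rewrite mulr1.
exists n, e%:P; split => //; split; first by rewrite -polyCM ee.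
move=> f; split => [Jf|[q ->]].
  exists f; apply/polyP => k; rewrite coefCM.
  by rewrite idempotent_mul_principal //; apply/He/r_ann_set_pow_coef_ideal.
apply/r_ann_mulr/(r_ann_sub (set_pow_sub (n:=n) (@poly_ideal_coef_ideal R J))).
exact: r_ann_set_pow_polyC.
Qed.

End QuasiBaer.

Theorem corollary3p11 (R : nzRingType) :
  armendariz R -> (gen_right_quasi_Baer {poly R} <-> gen_right_quasi_Baer R).
Proof.
move=> HA; split; [exact: gen_right_quasi_Baer_coef | exact: gen_right_quasi_Baer_poly].
Qed.
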